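(* Let $\Lambda\subseteq\mathbb{R}^d$ be a $d$-dimensional lattice and $F,G\colon K\to\mathbb{R}$ two $\Lambda$-periodic filters on a $\Lambda$-periodic cell complex $K$. Then $d_I(\mathcal{M}(F,\Lambda),\mathcal{M}(G,\Lambda))\le\|F-G\|_\infty$, and hence $J([\mathcal{M}(F,\Lambda)],[\mathcal{M}(G,\Lambda)])\le\|F-G\|_\infty$, where $\|F-G\|_\infty=\sup_{\sigma\in K}|F(\sigma)-G(\sigma)|$.
   Context: A cell complex $K$ in $\mathbb{R}^d$ is a locally finite collection of cells (each homeomorphic to a closed ball, boundaries unions of lower-dimensional cells, intersections unions of shared faces). A lattice spanned by linearly independent $u_1,\dots,u_p\in\mathbb{R}^d$ is the set of their integer combinations, of dimension $p$; $\mathrm{vol}_p$ denotes the $p$-dimensional volume of its unit cell $\{\sum c_iu_i: c_i\in[0,1)\}$ ($\mathrm{vol}_0(\{0\})=1$). $K$ is $\Lambda$-periodic if $\sigma+u\in K$ for $\sigma\in K,u\in\Lambda$; a filter $F\colon K\to\mathbb{R}$ satisfies $F(\sigma)\le F(\tau)$ when $\sigma$ is a face of $\tau$, and is $\Lambda$-periodic if $F(\sigma+u)=F(\sigma)$. $K/\Lambda$ is the finite quotient complex on the torus $\mathbb{R}^d/\Lambda$ and $F/\Lambda$ the quotient filter. The merge tree of a filter on a complex $L$ is the quotient of $\{(x,s): x\in L_s\}$ ($L_s$ the sublevel set at $s$) by $(x,s)\sim(y,t)$ iff $s=t$ and $x,y$ lie in the same component of $L_s$, with quotient topology and height $h$ (the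 $s$-coordinate); points are identified with components of sublevel sets; $B$ covers $A$ if $h(A)\le h(B)$ and $A\subseteq B$. For a component $\Gamma$ of $(K/\Lambda)_t$, with $\phi\colon\mathbb{R}^d\to\mathbb{R}^d/\Lambda$ the projection, a shadow is a component of $\phi^{-1}(\Gamma)$ and the periodicity lattice is $\Lambda_\Gamma=\{u\in\Lambda:\gamma+u=\gamma\}$ for a shadow $\gamma$; with $p=\dim\Lambda_\Gamma$ and $\nu_q$ the volume of the unit $q$-ball, the shadow monomial is $\frac{\mathrm{vol}_p(\Lambda_\Gamma)}{\mathrm{vol}_d(\Lambda)}\nu_{d-p}R^{d-p}$. The periodic merge tree $\mathcal{M}(F,\Lambda)$ is the merge tree of $F/\Lambda$ with height $h$ and frequency function $\Phi$ assigning each point its shadow monomial. Monomials are ordered by $tR^a<sR^b$ iff $a<b$, or $a=b$ and $t<s$. Interleaving distance: continuous maps $\varphi\colon\mathcal{M}\to\mathcal{M}'$, $\psi\colon\mathcal{M}'\to\mathcal{M}$ between periodic merge trees (heights $h,h'$, frequencies $\Phi,\Phi'$) are $\varepsilon$-compatible if for all $\Gamma\in\mathcal{M}$, $\Gamma'\in\mathcal{M}'$: (i) $h'(\varphi(\Gamma))=h(\Gamma)+\varepsilon$, $h(\psi(\Gamma'))=h'(\Gamma')+\varepsilon$; (ii) $\psi(\varphi(\Gamma))$ covers $\Gamma$ and $\varphi(\psi(\Gamma'))$ covers $\Gamma'$; (iii) $\Phi'(\varphi(\Gamma))\le\Phi(\Gamma)$, $\Phi(\psi(\Gamma'))\le\Phi'(\Gamma')$.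 $d_I(\mathcal{M},\mathcal{M}')$ is the infimum of such $\varepsilon\ge0$. Splintering: $\mathcal{M}_\Gamma$ is the subtree of points covered by $\Gamma$. $\mathcal{M}'$ splinters $\mathcal{M}$ if there is a continuous surjection $\omega\colon\mathcal{M}'\to\mathcal{M}$ with $h\circ\omega=h'$ such that for every $\Gamma\in\mathcal{M}$ and all $A,B\in\omega^{-1}(\Gamma)$: $d_I(\mathcal{M}'_A,\mathcal{M}'_B)=0$, $\omega$ maps each of $\mathcal{M}'_A,\mathcal{M}'_B$ onto $\mathcal{M}_\Gamma$, and $\Phi'(A)=\Phi'(B)=\Phi(\Gamma)/|\omega^{-1}(\Gamma)|$. $\mathcal{M}\simeq\mathcal{N}$ if some periodic merge tree splinters both; $[\mathcal{M}]$ is the class. $J([\mathcal{M}],[\mathcal{M}'])=\inf\sum_{i=1}^k d_I(\mathcal{M}_i,\mathcal{M}_i')$ over finite sequences with $\mathcal{M}_1\in[\mathcal{M}]$, $\mathcal{M}_k'\in[\mathcal{M}']$, $\mathcal{M}_i'\simeq\mathcal{M}_{i+1}$. *)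

From HB Require Import structures.
From mathcomp Require Import all_boot all_order all_algebra generic_quotient.
From mathcomp Require Import all_classical all_reals all_analysis.
Unset Printing Implicit Defensive.
Import Order.TTheory GRing.Theory Num.Theory numFieldNormedType.Exports.
Local Open Scope classical_set_scope.
Local Open Scope ring_scope.

Section Lattice.
Context {R : realType} {p d : nat}.
Definition lat (B : 'M[R]_(p, d)) : set 'rV[R]_d :=
  [set v | exists z : 'I_p -> int, v = \sum_(i < p) (z i)%:~R *: row i B].

Lemma lat0 B : lat B 0.
Proof. by exists (fun=> 0); rewrite big1 // => i _; rewrite mulr0z scale0r. Qed.
Lemma latB B x y : lat B x -> lat B y -> lat B (x - y).
Proof.
move=> [z ->] [w ->]; exists (fun i => z i - w i).
rewrite -sumrB; apply: eq_bigr => i _; by rewrite mulrzBr scalerBl.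
Qed.
End Lattice.

Section Torus.
Context {R : realType} {d : nat} (B : 'M[R]_d).
Definition lat_rel : rel 'rV[R]_d := fun x y => `[< lat B (x - y) >].
Lemma lat_rel_refl : reflexive lat_rel.
Proof. by move=> x; apply/asboolP; rewrite subrr; exact: lat0. Qed.
Lemma lat_rel_sym : symmetric lat_rel.
Proof.
move=> x y; apply/asboolP/asboolP => h;
by rewrite -opprB -sub0r; apply: latB => //; exact: lat0.
Qed.
Lemma lat_rel_trans : transitive lat_rel.
Proof.
move=> y x z /asboolP hxy /asboolP hyz; apply/asboolP.
have -> : x - z = (x - y) - (z - y) by rewrite opprB addrA subrK.
by apply: latB => //; rewrite -opprB -sub0r; apply: latB => //; exact: lat0.
Qed.
Canonical lat_equiv := EquivRel lat_rel lat_rel_refl lat_rel_sym lat_rel_trans.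
Local Open Scope quotient_scope.
Definition torus := quotient_topology {eq_quot lat_equiv}.
Definition torus_proj (x : 'rV[R]_d) : torus := \pi_torus x.
End Torus.

Section MergeTree.
Context {R : realType} {T : topologicalType} (L : R -> set T).
Definition mt_dom : set (T * R)%type := [set q | L q.2 q.1].
Definition mt_rel : rel (set_type mt_dom) := fun a b =>
  `[< (\val a).2 = (\val b).2 /\
      connected_component (L (\val a).2) (\val a).1 (\val b).1 >].
Lemma mt_rel_refl : reflexive mt_rel.
Proof.
move=> a; apply/asboolP; split => //; apply: connected_component_refl.
by have := set_valP a.
Qed.
Lemma mt_rel_sym : symmetric mt_rel.
Proof.
move=> a b; apply/asboolP/asboolP => -[e c]; split => //;
by rewrite -e; apply: connected_component_sym.
Qed.
Lemma mt_rel_trans : transitive mt_rel.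
Proof.
move=> b a c /asboolP[e1 c1] /asboolP[e2 c2]; apply/asboolP; split.
  by rewrite e1.
by apply: (connected_component_trans c1); rewrite e1.
Qed.
Canonical mt_equiv := EquivRel mt_rel mt_rel_refl mt_rel_sym mt_rel_trans.
Local Open Scope quotient_scope.
Definition mergetree := quotient_topology {eq_quot mt_equiv}.
Definition mt_height (A : mergetree) : R := (\val (repr A)).2.
Definition mt_comp (A : mergetree) : set T :=
  connected_component (L (mt_height A)) (\val (repr A)).1.
(* "B covers A" *)
Definition mt_covers (A B : mergetree) : Prop :=
  mt_height A <= mt_height B /\ mt_comp A `<=` mt_comp B.
End MergeTree.

(* ---------- monomials t R^a, encoded as pairs (t, a) ---------- *)
Definition mono_lt {R : realType} (m1 m2 : R * nat) : Prop :=
  (m1.2 < m2.2)%N \/ (m1.2 = m2.2 /\ m1.1 < m2.1).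
Definition mono_le {R : realType} (m1 m2 : R * nat) : Prop :=
  mono_lt m1 m2 \/ m1 = m2.

(* volume of the unit q-ball: nu_0 = 1, nu_1 = 2, nu_{q+2} = 2 pi/(q+2) nu_q *)
Fixpoint nu {R : realType} (q : nat) : R :=
  match q with
  | 0%N => 1
  | 1%N => 2
  | q'.+2 => 2 * pi / (q'.+2)%:R * nu q'
  end.

(* p-dimensional volume of the unit cell spanned by the rows of C *)
Definition lvol {R : realType} {p d : nat} (C : 'M[R]_(p, d)) : R :=
  Num.sqrt (\det (C *m C^T)).

Definition shift {R : realType} {d : nat} (S : set 'rV[R]_d) (u : 'rV[R]_d) :=
  [set x + u | x in S].

Section Complex.
Context {R : realType} {d : nat}.
Local Notation V := 'rV[R]_d.

Definition unit_cball (k : nat) : set 'rV[R]_k :=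
  [set x | \sum_(i < k) x ord0 i ^+ 2 <= 1].
Definition unit_sphere (k : nat) : set 'rV[R]_k :=
  [set x | \sum_(i < k) x ord0 i ^+ 2 = 1].
Arguments unit_cball : clear implicits.
Arguments unit_sphere : clear implicits.

Definition cell_homeo (k : nat) (sigma : set V) (f : 'rV[R]_k -> V) : Prop :=
  {within unit_cball k, continuous f} /\ f @` unit_cball k = sigma /\
  exists g : V -> 'rV[R]_k, {within sigma, continuous g} /\
    (forall x, unit_cball k x -> g (f x) = x).

Definition is_cell (k : nat) (sigma : set V) : Prop :=
  exists f, cell_homeo k sigma f.

Definition cell_complex (K : set (set V)) : Prop :=
  (forall sigma, K sigma -> exists k, is_cell k sigma) /\
  (forall sigma k f, K sigma -> cell_homeo k sigma f ->
     f @` unit_sphere k =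
     \bigcup_(tau in [set tau | K tau /\ tau `<=` f @` unit_sphere k /\
                      exists2 j, (j < k)%N & is_cell j tau]) tau) /\
  (forall sigma tau, K sigma -> K tau ->
     sigma `&` tau =
     \bigcup_(rho in [set rho | K rho /\ rho `<=` sigma /\ rho `<=` tau]) rho) /\
  (forall x : V, exists2 U, nbhs x U &
     finite_set [set sigma | K sigma /\ sigma `&` U !=set0]).

(* faces of tau in K are the cells of K contained in tau *)
Definition is_filter (K : set (set V)) (F : set V -> R) : Prop :=
  forall sigma tau, K sigma -> K tau -> sigma `<=` tau -> F sigma <= F tau.

Definition periodic_complex (B : 'M[R]_d) (K : set (set V)) : Prop :=
  forall sigma u, K sigma -> lat B u -> K (shift sigma u).

Definition periodic_filter (B : 'M[R]_d) (K : set (set V)) (F : set V -> R) :=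
  forall sigma u, K sigma -> lat B u -> F (shift sigma u) = F sigma.

Definition periodic_setting (B : 'M[R]_d) (K : set (set V)) (F : set V -> R) :=
  row_free B /\ cell_complex K /\ periodic_complex B K /\ is_filter K F /\
  periodic_filter B K F.

(* sublevel set at s of the quotient filter F/Lambda on K/Lambda *)
Definition qsublevel (B : 'M[R]_d) (K : set (set V)) (F : set V -> R) (s : R) :
  set (torus B) :=
  torus_proj B @` \bigcup_(sigma in [set sigma | K sigma /\ F sigma <= s]) sigma.

Definition shadow_monomial (B : 'M[R]_d) (Gamma : set (torus B)) : R * nat :=
  xget (0, 0%N) [set m | exists x : V, Gamma (torus_proj B x) /\
    let gamma := connected_component (torus_proj B @^-1` Gamma) x in
    exists p (C : 'M[R]_(p, d)), row_free C /\
      lat C = [set u | lat B u /\ shift gamma u = gamma] /\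
      m = (lvol C / lvol B * nu (d - p), (d - p)%N)].
End Complex.

Record pmt (R : realType) := PMT {
  pm_car : topologicalType;
  pm_dom : set pm_car;
  pm_h : pm_car -> R;
  pm_freq : pm_car -> R * nat;
  pm_cov : pm_car -> pm_car -> Prop }.     (* pm_cov A B : "B covers A" *)
Arguments pm_car {R}. Arguments pm_dom {R}. Arguments pm_h {R}.
Arguments pm_freq {R}. Arguments pm_cov {R}.

Definition MT {R : realType} {d : nat} (B : 'M[R]_d) (K : set (set 'rV[R]_d))
  (F : set 'rV[R]_d -> R) : pmt R :=
  @PMT R (mergetree (qsublevel B K F)) setT
    (@mt_height R _ (qsublevel B K F))
    (fun A => shadow_monomial B (mt_comp (qsublevel B K F) A))
    (@mt_covers R _ (qsublevel B K F)).

Record pdata (R : realType) (d : nat) := PData {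
  pd_B : 'M[R]_d; pd_K : set (set 'rV[R]_d); pd_F : set 'rV[R]_d -> R;
  pd_ok : periodic_setting pd_B pd_K pd_F }.
Arguments pd_B {R d}. Arguments pd_K {R d}. Arguments pd_F {R d}.

Definition MTof {R : realType} {d : nat} (D : pdata R d) : pmt R :=
  MT (pd_B D) (pd_K D) (pd_F D).

Section Interleaving.
Context {R : realType}.
Local Open Scope ereal_scope.

Definition compatible (e : R) (M M' : pmt R)
  (phi : pm_car M -> pm_car M') (psi : pm_car M' -> pm_car M) : Prop :=
  {within pm_dom M, continuous phi} /\ {within pm_dom M', continuous psi} /\
  (forall A, pm_dom M A -> pm_dom M' (phi A)) /\
  (forall A, pm_dom M' A -> pm_dom M (psi A)) /\
  (forall A, pm_dom M A -> pm_h M' (phi A) = (pm_h M A + e)%R) /\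
  (forall A, pm_dom M' A -> pm_h M (psi A) = (pm_h M' A + e)%R) /\
  (forall A, pm_dom M A -> pm_cov M A (psi (phi A))) /\
  (forall A, pm_dom M' A -> pm_cov M' A (phi (psi A))) /\
  (forall A, pm_dom M A -> mono_le (pm_freq M' (phi A)) (pm_freq M A)) /\
  (forall A, pm_dom M' A -> mono_le (pm_freq M (psi A)) (pm_freq M' A)).

Definition dI (M M' : pmt R) : \bar R :=
  ereal_inf [set e%:E | e in [set e : R | (0 <= e)%R /\
     exists phi psi, compatible e M M' phi psi]].

Definition subtree (M : pmt R) (G : pm_car M) : pmt R :=
  @PMT R (pm_car M) [set A | pm_dom M A /\ pm_cov M A G]
    (pm_h M) (pm_freq M) (pm_cov M).

Definition splinters (M' M : pmt R) : Prop :=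
  exists omega : pm_car M' -> pm_car M,
    {within pm_dom M', continuous omega} /\
    (forall A, pm_dom M' A -> pm_dom M (omega A)) /\
    pm_dom M `<=` omega @` pm_dom M' /\
    (forall A, pm_dom M' A -> pm_h M (omega A) = pm_h M' A) /\
    forall G, pm_dom M G ->
      let fib := [set A | pm_dom M' A /\ omega A = G] in
      exists n : nat, (fib #= `I_n)%card /\
        forall A B, fib A -> fib B ->
          dI (subtree M' A) (subtree M' B) = 0 /\
          omega @` pm_dom (subtree M' A) = pm_dom (subtree M G) /\
          omega @` pm_dom (subtree M' B) = pm_dom (subtree M G) /\
          pm_freq M' A = (((pm_freq M G).1 / n%:R)%R, (pm_freq M G).2) /\
          pm_freq M' B = (((pm_freq M G).1 / n%:R)%R, (pm_freq M G).2).

Definition pmt_equiv (d : nat) (M N : pmt R) : Prop :=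
  exists D : pdata R d, splinters (MTof D) M /\ splinters (MTof D) N.

Definition Jdist (d : nat) (M M' : pmt R) : \bar R :=
  ereal_inf [set x | exists (k : nat) (Ms Ms' : nat -> pdata R d),
    (0 < k)%N /\ pmt_equiv d (MTof (Ms 0%N)) M /\
    pmt_equiv d (MTof (Ms' k.-1)) M' /\
    (forall i, (i.+1 < k)%N -> pmt_equiv d (MTof (Ms' i)) (MTof (Ms i.+1))) /\
    x = \sum_(i < k) dI (MTof (Ms i)) (MTof (Ms' i))].

Definition supnorm {d : nat} (K : set (set 'rV[R]_d)) (F G : set 'rV[R]_d -> R)
  : \bar R :=
  (* sup over sigma in K of |F sigma - G sigma|; the extra 0 only matters
     for the degenerate case K = set0, where the sup-norm is 0 *)
  ereal_sup ([set 0] `|` [set (`|F sigma - G sigma|%R)%:E | sigma in K]).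
End Interleaving.

(* If |F - G| <= e on K, the sublevel set of F/Lambda at height s lies in that of
   G/Lambda at height s + e and vice versa, so sending a component at height s to the
   component containing it at height s + e gives e-compatible maps between the merge
   trees.  They do not increase frequencies: a component Gamma is sent to a component
   Gamma' containing it, so a shadow of Gamma lies in a shadow of Gamma' and its
   periodicity lattice is a sublattice of that of Gamma'; a superlattice of higher rank
   has a monomial of lower degree, one of equal rank has smaller covolume.  This uses
   that all shadows of Gamma' are Lambda-translates of each other: the cells make the
   lifted sublevel set locally connected, so the Lambda-saturation of one of its
   components projects onto an open and closed part of the connected set Gamma'.
   Periodicity lattices have bases because every subgroup of a lattice does.  Finally
   J <= d_I through the one-term sequence, each merge tree splintering itself. *)

From Pilot Require Import Defs.
From HB Require Import structures.
From mathcomp Require Import all_boot all_order all_algebra generic_quotient.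
From mathcomp Require Import all_classical all_reals all_analysis.
From mathcomp Require Import zify lra.
Import Order.TTheory GRing.Theory Num.Theory numFieldNormedType.Exports.
Local Open Scope classical_set_scope.
Local Open Scope ring_scope.
Local Open Scope quotient_scope.

(* The analysis library's [shift] (landau.v) hides the translation of sets of Defs. *)
Local Notation shift := Pilot.Defs.shift.

Section LatticeMonomial.
Context {R : realType} {d : nat}.
Implicit Types (B : 'M[R]_d).

Lemma latP {p} (C : 'M[R]_(p, d)) v :
  lat C v <-> exists z : 'rV[int]_p, v = map_mx intr z *m C.
Proof.
split=> [[z ->]|[z ->]].
  by exists (\row_i z i); rewrite mulmx_sum_row; apply: eq_bigr => i _; rewrite !mxE.
by exists (z 0); rewrite mulmx_sum_row; apply: eq_bigr => i _; rewrite mxE.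
Qed.

Lemma latN {p} {C : 'M[R]_(p, d)} {u} : lat C u -> lat C (- u).
Proof. by move=> Cu; rewrite -sub0r; apply: latB => //; exact: lat0. Qed.

Lemma latD {p} {C : 'M[R]_(p, d)} {u v} : lat C u -> lat C v -> lat C (u + v).
Proof. by move=> Cu Cv; rewrite -[v]opprK; apply: latB => //; exact: latN. Qed.

Lemma lat_row {p} (C : 'M[R]_(p, d)) i : lat C (row i C).
Proof. by apply/latP; exists (delta_mx 0 i); rewrite map_delta_mx rowE. Qed.

Lemma lat_subset_intmx {p p'} (C : 'M[R]_(p, d)) (C' : 'M[R]_(p', d)) :
  lat C `<=` lat C' -> exists M : 'M[int]_(p, p'), C = map_mx intr M *m C'.
Proof.
move=> CC'; have /choice[z zP] i := (latP _ _).1 (CC' _ (lat_row C i)).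
exists (\matrix_i z i); apply/row_matrixP => i.
by rewrite row_mul zP; congr (_ *m _); apply/rowP => j; rewrite !mxE.
Qed.

Lemma lvol_intmx {p} (M : 'M[int]_p) (C : 'M[R]_(p, d)) :
  lvol (map_mx intr M *m C) = `|(\det M)%:~R| * lvol C.
Proof.
rewrite /lvol trmx_mul !mulmxA -(mulmxA _ C) !det_mulmx det_tr det_map_mx mulrAC -expr2.
by rewrite sqrtrM ?sqr_ge0 // sqrtr_sqr.
Qed.

Lemma nu_ge0 q : 0 <= (nu q : R).
Proof.
elim/ltn_ind: q => -[|[|q]] IH //=; rewrite ?ler0n //.
by rewrite mulr_ge0 ?IH // divr_ge0 ?ler0n // mulr_ge0 ?pi_ge0.
Qed.

Definition lat_monomial B {p} (C : 'M[R]_(p, d)) : R * nat :=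
  (lvol C / lvol B * nu (d - p), (d - p)%N).

Lemma lat_monomial_le B {p p'} (C : 'M[R]_(p, d)) (C' : 'M[R]_(p', d)) :
  row_free C -> row_free C' -> lat C `<=` lat C' ->
  mono_le (lat_monomial B C') (lat_monomial B C).
Proof.
move=> freeC freeC' /lat_subset_intmx[M CE].
have le_pp' : (p <= p')%N.
  by move: freeC freeC' => /eqP <- /eqP <-; rewrite CE mxrankM_maxr.
have le_p'd : (p' <= d)%N by move: freeC' => /eqP <-; rewrite rank_leq_col.
have [lt_pp'|le_p'p] := ltnP p p'; first by left; left => /=; lia.
have pp' : p' = p by apply/anti_leq; rewrite le_p'p le_pp'.
subst p'.
have detM_ge1 : 1 <= `|(\det M)%:~R : R|.
  have : row_free (map_mx intr M : 'M[R]_p).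
    by rewrite /row_free eqn_leq rank_leq_row -{1}(eqP freeC) CE mxrankM_maxl.
  rewrite row_free_unit unitmxE det_map_mx unitfE -intr_norm ler1z intr_eq0.
  by rewrite -normr_gt0.
have : (lat_monomial B C').1 <= (lat_monomial B C).1.
  rewrite /= ler_wpM2r ?nu_ge0 // ler_wpM2r ?invr_ge0 ?sqrtr_ge0 //.
  by rewrite CE lvol_intmx -[leLHS]mul1r ler_wpM2r ?sqrtr_ge0.
rewrite le_eqVlt => /orP[/eqP eq1|lt1]; last by left; right.
by right; rewrite [LHS]surjective_pairing eq1.
Qed.
End LatticeMonomial.

Lemma lat_col_mx {R : realType} {p d} (w : 'rV[R]_d) (C : 'M[R]_(p, d)) x :
  lat (col_mx w C) x <-> exists (a : int) y, lat C y /\ x = a%:~R *: w + y.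
Proof.
split=> [/latP[z ->]|[a [y [/latP[z ->] ->]]]].
  exists (lsubmx z 0 0), (map_mx intr (rsubmx z) *m C).
  split; first by apply/latP; exists (rsubmx z).
  rewrite -[z]hsubmxK map_row_mx mul_row_col row_mxKl row_mxKr.
  by rewrite [map_mx _ (lsubmx z)]mx11_scalar mul_scalar_mx !mxE.
apply/latP; exists (row_mx a%:M z).
by rewrite map_row_mx mul_row_col map_scalar_mx mul_scalar_mx.
Qed.

Section LatticeSubgroup.
Context {R : realType} {d : nat} (B : 'M[R]_d).
Hypothesis unitB : B \in unitmx.
Local Notation V := 'rV[R]_d.

Definition is_subgroup (S : set V) := S 0 /\ forall u v, S u -> S v -> S (u - v).

Lemma subgroupN S v : is_subgroup S -> S v -> S (- v).
Proof. by move=> [S0 SB] Sv; rewrite -sub0r; apply: SB. Qed.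

Lemma subgroupD S u v : is_subgroup S -> S u -> S v -> S (u + v).
Proof. by move=> Ssub Su Sv; rewrite -[v]opprK; apply: Ssub.2 => //; apply: subgroupN. Qed.

Lemma subgroupMz S v (z : int) : is_subgroup S -> S v -> S (z%:~R *: v).
Proof.
move=> Ssub Sv; have Sn n : S (v *+ n).
  by elim: n => [|n IH]; [rewrite mulr0n; exact: Ssub.1|rewrite mulrS; apply: subgroupD].
rewrite scaler_int; case: z => n; first exact: Sn.
by rewrite NegzE mulrNz; apply: subgroupN => //; exact: Sn.
Qed.

Definition lat_coord (v : V) j := (v *m invmx B) 0 j.

Lemma lat_coord0 j : lat_coord 0 j = 0.
Proof. by rewrite /lat_coord mul0mx mxE. Qed.

Lemma lat_coordD u v j : lat_coord (u + v) j = lat_coord u j + lat_coord v j.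
Proof. by rewrite /lat_coord mulmxDl !mxE. Qed.

Lemma lat_coordB u v j : lat_coord (u - v) j = lat_coord u j - lat_coord v j.
Proof. by rewrite /lat_coord mulmxBl !mxE. Qed.

Lemma lat_coordZ a v j : lat_coord (a *: v) j = a * lat_coord v j.
Proof. by rewrite /lat_coord -scalemxAl mxE. Qed.

Lemma lat_coord_int v j : lat B v -> exists z : int, lat_coord v j = z%:~R.
Proof. by move=> /latP[z ->]; exists (z 0 j); rewrite /lat_coord mulmxK // mxE. Qed.

Lemma lat_coord_eq0 v : (forall j, lat_coord v j = 0) -> v = 0.
Proof.
move=> v0; rewrite -[v](mulmxKV unitB).
suff -> : v *m invmx B = 0 by rewrite mul0mx.
by apply/rowP => j; rewrite [RHS]mxE; apply: v0.
Qed.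

Lemma subgroup_coord_generator S j : is_subgroup S -> S `<=` lat B ->
    (exists2 v, S v & lat_coord v j != 0) ->
  exists2 w, S w & lat_coord w j != 0 /\
    forall v, S v -> exists q : int, lat_coord v j = q%:~R * lat_coord w j.
Proof.
move=> Ssub SB [v0 Sv0 v0j].
pose P k := `[< (0 < k)%N /\ exists2 v, S v & lat_coord v j = k%:R >].
have [k Pk] : exists k, P k.
  have [z zE] := lat_coord_int _ j (SB _ Sv0).
  exists `|z|%N; apply/asboolP; split.
    by rewrite absz_gt0; apply: contraNneq v0j => z0; rewrite zE z0.
  have [z_ge0|z_lt0] := leP 0 z.
    by exists v0; rewrite // zE natr_absz ger0_norm.
  exists (- v0); first exact: subgroupN.
  by rewrite -sub0r lat_coordB lat_coord0 zE natr_absz ltr0_norm ?ltr0z // sub0r intrN.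
case: (ex_minnP (ex_intro _ k Pk)) => g /asboolP[g_gt0 [w Sw wj]] g_min.
exists w => //; split; first by rewrite wj pnatr_eq0 -lt0n.
move=> v Sv; have [m mE] := lat_coord_int _ j (SB _ Sv).
pose v' := v - (m %/ g)%Z%:~R *: w.
have v'j : lat_coord v' j = (m %% g)%Z%:~R.
  by rewrite lat_coordB lat_coordZ wj mE {1}(divz_eq m g) intrD intrM addrAC subrr add0r.
suff r0 : (m %% g)%Z = 0.
  by exists (m %/ g)%Z; rewrite wj mE {1}(divz_eq m g) r0 addr0 intrM.
have r_ge0 : (0 <= m %% g)%Z by rewrite modz_ge0 // -lt0n.
have r_lt : (m %% g < g)%Z by rewrite ltz_pmod // ltz_nat.
apply: contraTeq r_lt => r0; rewrite -leNgt -[(m %% g)%Z]gez0_abs // lez_nat.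
apply: g_min; apply/asboolP; split; first by rewrite absz_gt0.
exists v'; first by apply: Ssub.2 => //; apply: subgroupMz.
by rewrite v'j natr_absz ger0_norm.
Qed.

Lemma lat_coord_mul p (b : 'rV[R]_p) (C : 'M[R]_(p, d)) j :
  lat_coord (b *m C) j = \sum_i b 0 i * lat_coord (row i C) j.
Proof.
rewrite /lat_coord -mulmxA mxE; apply: eq_bigr => i _.
by congr (_ * _); rewrite -row_mul [RHS]mxE.
Qed.

Lemma row_free_col_mx p (w : V) (C : 'M[R]_(p, d)) j :
  row_free C -> (forall i, lat_coord (row i C) j = 0) -> lat_coord w j != 0 ->
  row_free (col_mx w C).
Proof.
move=> freeC Cj0 wj; apply/inj_row_free => v.
rewrite -[v]hsubmxK mul_row_col [lsubmx v]mx11_scalar mul_scalar_mx => v0.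
have a0 : lsubmx v 0 0 = 0.
  have := congr1 (lat_coord^~ j) v0; rewrite lat_coordD lat_coordZ lat_coord_mul.
  rewrite big1 => [|i _]; last by rewrite Cj0 mulr0.
  by rewrite lat_coord0 addr0 => /eqP; rewrite mulf_eq0 (negPf wj) orbF => /eqP.
move: v0; rewrite a0 scale0r add0r => /eqP; rewrite mulmx_free_eq0 // => /eqP->.
by rewrite raddf0 row_mx0.
Qed.

Lemma lat_subgroup_basis_coord n S : is_subgroup S -> S `<=` lat B ->
    (forall v, S v -> forall j : 'I_d, (n <= j)%N -> lat_coord v j = 0) ->
  exists p (C : 'M[R]_(p, d)), row_free C /\ lat C = S.
Proof.
elim: n S => [|n IH] S Ssub SB Sn.
  have S0 : S = [set 0].
    apply/seteqP; split=> [v Sv|_ ->]; last exact: Ssub.1.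
    by apply: lat_coord_eq0 => j; apply: Sn.
  exists 0%N, 0; split; first by rewrite /row_free mxrank0.
  rewrite S0; apply/seteqP; split=> [v /latP[z ->]|_ ->]; first by rewrite mulmx0.
  exact: lat0.
have [n_lt_d|d_le_n] := ltnP n d; last first.
  by apply: IH => // v Sv j; rewrite leqNgt (leq_trans (ltn_ord j)).
pose j := Ordinal n_lt_d.
pose S0 := [set v | S v /\ lat_coord v j = 0].
have S0n v : S0 v -> forall k : 'I_d, (n <= k)%N -> lat_coord v k = 0.
  move=> [Sv vj] k; rewrite leq_eqVlt => /orP[/eqP/esym nk|]; last exact: Sn.
  by have -> : k = j by apply: val_inj; rewrite /= nk.
have [Sj0|] := pselect (forall v, S v -> lat_coord v j = 0).
  by apply: IH => // v Sv; apply: S0n; split => //; exact: Sj0.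
move=> /existsNP[v /not_implyP[Sv /eqP vj]].
have [w Sw [wj w_gen]] := subgroup_coord_generator S j Ssub SB (ex_intro2 _ _ v Sv vj).
have S0sub : is_subgroup S0.
  split; first by split; [exact: Ssub.1|exact: lat_coord0].
  by move=> u u' [Su uj] [Su' u'j]; split; [exact: Ssub.2|rewrite lat_coordB uj u'j subr0].
have [p [C0 [freeC0 C0E]]] := IH S0 S0sub (fun v Sv => SB v Sv.1) S0n.
have C0j i : lat_coord (row i C0) j = 0.
  by have [] : S0 (row i C0) by rewrite -C0E; exact: lat_row.
exists (1 + p)%N, (col_mx w C0); split; first exact: row_free_col_mx C0j wj.
apply/seteqP; split=> [u /lat_col_mx[a [y [+ ->]]]|u Su].
  by rewrite C0E => -[Sy _]; apply: subgroupD => //; exact: subgroupMz.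
have [q uj] := w_gen u Su.
apply/lat_col_mx; exists q, (u - q%:~R *: w); split; last by rewrite addrC subrK.
rewrite C0E; split; first by apply: Ssub.2 => //; exact: subgroupMz.
by rewrite lat_coordB lat_coordZ uj subrr.
Qed.

Lemma lat_subgroup_basis S : is_subgroup S -> S `<=` lat B ->
  exists p (C : 'M[R]_(p, d)), row_free C /\ lat C = S.
Proof.
move=> Ssub SB; apply: (lat_subgroup_basis_coord d) => // v _ j.
by rewrite leqNgt ltn_ord.
Qed.
End LatticeSubgroup.

Lemma connected_componentS {T : topologicalType} (A B : set T) x : A `<=` B ->
  connected_component A x `<=` connected_component B x.
Proof.
move=> AB; have [Ax|nAx] := pselect (A x); last by rewrite connected_component_out.
apply: connected_component_max; first exact: connected_component_refl.
  by apply: subset_trans AB; exact: connected_component_sub.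
exact: component_connected.
Qed.

Section MergeTreePoints.
Context {R : realType} {T : topologicalType} (L : R -> set T).

Lemma mt_piP (a b : set_type (mt_dom L)) :
  \pi_(mergetree L) a = \pi_(mergetree L) b <-> mt_rel L a b.
Proof. by split=> /(@eqmodP _ (mt_equiv L)). Qed.

Lemma mt_rel_repr a : mt_rel L (repr (\pi_(mergetree L) a)) a.
Proof. by apply/mt_piP; rewrite reprK. Qed.

Lemma mt_height_pi a : mt_height L (\pi_(mergetree L) a) = (\val a).2.
Proof. by have /asboolP[] := mt_rel_repr a. Qed.

Lemma mt_comp_pi a :
  mt_comp L (\pi_(mergetree L) a) = connected_component (L (\val a).2) (\val a).1.
Proof.
have /asboolP[h c] := mt_rel_repr a; rewrite /mt_comp /mt_height h.
by apply: same_connected_component; rewrite -h.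
Qed.

Lemma mt_covers_refl A : mt_covers L A A.
Proof. by split. Qed.

Lemma mt_comp_nonempty A : mt_comp L A !=set0.
Proof.
exists (\val (repr A)).1; apply: connected_component_refl.
exact: set_valP (repr A).
Qed.
End MergeTreePoints.

Section MergeTreeShift.
Context {R : realType} {T : topologicalType} {L1 L2 : R -> set T} {e : R}.
Hypothesis L12 : forall {s x}, L1 s x -> L2 (s + e) x.

Definition mt_lift (a : set_type (mt_dom L1)) : set_type (mt_dom L2) :=
  @SigSub _ _ (mt_dom L2) ((\val a).1, (\val a).2 + e)
    (mem_set (L12 (set_valP a : L1 (\val a).2 (\val a).1))).

Definition mt_shift (A : mergetree L1) : mergetree L2 :=
  \pi_(mergetree L2) (mt_lift (repr A)).

Lemma mt_lift_rel a b : mt_rel L1 a b -> mt_rel L2 (mt_lift a) (mt_lift b).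
Proof.
move/asboolP => [h c]; apply/asboolP; split; first by rewrite /= h.
by apply: connected_componentS c => x; apply: L12.
Qed.

Lemma shift_snd_continuous : continuous (fun p : T * R => (p.1, p.2 + e)).
Proof.
case=> a b W /= [[U V]] [/= Ua Vb] UVW.
have cb : (fun s : R => s + e) @ b --> b + e by apply: cvgD; [exact: cvg_id|exact: cvg_cst].
exists (U, (fun s => s + e) @^-1` V); first by split => //; exact: cb.
by case=> x y [/= Ux Vy]; apply: UVW; split.
Qed.

Lemma mt_lift_continuous : continuous mt_lift.
Proof.
apply: (@continuous_comp_initial _ _ _ set_val).
have -> : set_val \o mt_lift = (fun p : T * R => (p.1, p.2 + e)) \o set_val by [].
move=> x; apply: continuous_comp; first exact: initial_continuous.
exact: shift_snd_continuous.
Qed.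

Lemma mt_shift_continuous : continuous mt_shift.
Proof.
have -> : mt_shift = (\pi_(mergetree L2) \o mt_lift) \o repr by [].
apply: repr_comp_continuous => [x|a b /eqP/mt_piP ab].
  by apply: continuous_comp; [exact: mt_lift_continuous|exact: pi_continuous].
by apply/eqP/mt_piP; exact: mt_lift_rel.
Qed.

Lemma mt_shift_height A : mt_height L2 (mt_shift A) = mt_height L1 A + e.
Proof. by rewrite /mt_shift mt_height_pi. Qed.

Lemma mt_shift_comp A : mt_comp L1 A `<=` mt_comp L2 (mt_shift A).
Proof.
rewrite /mt_shift mt_comp_pi /= /mt_comp /mt_height.
by apply: connected_componentS => x; apply: L12.
Qed.
End MergeTreeShift.

Lemma mt_shift_covers {R : realType} {T : topologicalType} {L1 L2 : R -> set T} {e : R}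
    (L12 : forall s x, L1 s x -> L2 (s + e) x) (L21 : forall s x, L2 s x -> L1 (s + e) x) A :
  0 <= e -> mt_covers L1 A (mt_shift L21 (mt_shift L12 A)).
Proof.
move=> e_ge0; split; first by rewrite !mt_shift_height -addrA lerDl addr_ge0.
exact: subset_trans (mt_shift_comp L12 A) (mt_shift_comp L21 _).
Qed.

Section Cells.
Context {R : realType}.

Lemma unit_cball_coord_le1 {k} {x : 'rV[R]_k} i : unit_cball k x -> `|x ord0 i| <= 1.
Proof.
rewrite /unit_cball /= (bigD1 i) //= => h.
have h2 : x ord0 i ^+ 2 <= 1.
  by apply: le_trans h; rewrite lerDl; apply: sumr_ge0 => j _; exact: sqr_ge0.
by rewrite ler_norml; apply/andP; split; nra.
Qed.

Lemma unit_cball_compact k : compact (@unit_cball R k).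
Proof.
apply: (@bounded_closed_compact R).
  rewrite /= /bounded_near; near=> M => x Bx /=.
  rewrite /Num.norm /= mx_normrE; apply: bigmax_le => //= -[i j] _ /=.
  rewrite (ord1 i); apply: le_trans (unit_cball_coord_le1 j Bx) _.
  by near: M; apply: nbhs_pinfty_ge; rewrite num_real.
change (closed ((fun x : 'rV[R]_k => \sum_(i < k) x ord0 i ^+ 2) @^-1` [set r : R | r <= 1])).
apply: preimage_closed; last exact: closed_le.
move=> x _; apply: (@continuous_big _ _ +%R 0 xpredT add_continuous) => i _ y.
apply: (@continuous_comp _ _ _ (fun M : 'rV[R]_k => M ord0 i) (fun r : R => r ^+ 2)).
  exact: coord_continuous.
exact: exprn_continuous.
Unshelve. all: by end_near. Qed.

Lemma unit_cball_connected k : connected (@unit_cball R k).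
Proof.
have -> : unit_cball k = \bigcup_(x in unit_cball k) ((fun t : R => t *: x) @` `[0, 1]).
  apply/seteqP; split => [y By|y [x Bx [t]]].
    by exists y => //; exists 1; rewrite ?scale1r //= in_itv /= ler01 lexx.
  rewrite /= in_itv /= => /andP[t0 t1] <-; rewrite /unit_cball /=.
  under eq_bigr do rewrite mxE exprMn.
  rewrite -mulr_sumr; apply: le_trans (_ : t ^+ 2 * 1 <= 1).
    by apply: ler_wpM2l => //; exact: sqr_ge0.
  by rewrite mulr1; nra.
apply: bigcup_connected.
  exists 0 => x Bx; exists 0; last by rewrite scale0r.
  by rewrite /= in_itv /= lexx ler01.
move=> x _; apply: connected_continuous_connected; first exact: segment_connected.
by apply: continuous_subspaceT => t; exact: scalel_continuous.
Qed.

Context {d : nat} (K : set (set 'rV[R]_d)).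
Hypothesis cK : cell_complex K.

Lemma cell_closed sigma : K sigma -> closed sigma.
Proof.
move=> Ksigma; have [k [f [cf [<- _]]]] := cK.1 _ Ksigma.
apply: compact_closed; first exact: norm_hausdorff.
exact: continuous_compact cf (unit_cball_compact k).
Qed.

Lemma cell_connected sigma : K sigma -> connected sigma.
Proof.
move=> Ksigma; have [k [f [cf [<- _]]]] := cK.1 _ Ksigma.
exact: connected_continuous_connected (unit_cball_connected k) cf.
Qed.
End Cells.

Section Translations.
Context {R : realType} {d : nat}.
Local Notation V := 'rV[R]_d.

Lemma translation_continuous (u : V) : continuous (fun y : V => y + u).
Proof.
by move=> y; apply: (@cvgD _ _ _ (nbhs y) _ id (fun=> u)); [exact: cvg_id|exact: cvg_cst].
Qed.

Lemma shiftP (S : set V) u y : shift S u y <-> S (y - u).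
Proof.
split=> [[x Sx <-]|Syu]; first by rewrite addrK.
by exists (y - u) => //; rewrite subrK.
Qed.

Lemma shiftD (S : set V) u v : shift (shift S u) v = shift S (u + v).
Proof. by apply/seteqP; split=> y /shiftP; rewrite ?shiftP opprD addrA addrAC. Qed.

Lemma shift0 (S : set V) : shift S 0 = S.
Proof. by apply/seteqP; split=> y; rewrite shiftP subr0. Qed.

Lemma shift_connected_component_sub (Y : set V) u x : (forall z, Y z -> Y (z + u)) ->
  shift (connected_component Y x) u `<=` connected_component Y (x + u).
Proof.
move=> Yu; have [Yx|nYx] := pselect (Y x); last first.
  by rewrite connected_component_out // => y /shiftP.
apply: connected_component_max.
- by apply/shiftP; rewrite addrK; exact: connected_component_refl.
- by move=> y /shiftP /connected_component_sub /Yu; rewrite subrK.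
- apply: connected_continuous_connected; first exact: component_connected.
  by apply: continuous_subspaceT; exact: translation_continuous.
Qed.

Lemma shift_connected_component (Y : set V) u x : (forall z, Y (z + u) <-> Y z) ->
  connected_component Y (x + u) = shift (connected_component Y x) u.
Proof.
move=> Yu; apply/seteqP; split; last by apply: shift_connected_component_sub => z /Yu.
move=> y cy; apply/shiftP.
have := @shift_connected_component_sub Y (- u) (x + u); rewrite addrK; apply.
  by move=> z Yz; apply/Yu; rewrite subrK.
by apply/shiftP; rewrite opprK subrK.
Qed.
End Translations.

Section Torus.
Context {R : realType} {d : nat} (B : 'M[R]_d).
Local Notation V := 'rV[R]_d.
Local Notation proj := (torus_proj B).

Lemma torus_projP x y : proj x = proj y <-> lat B (x - y).
Proof.
by split=> [/(@eqmodP _ (lat_equiv B))/asboolP|/asboolP/(@eqmodP _ (lat_equiv B))].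
Qed.

Lemma torus_proj_open (W : set V) : open W -> open (proj @` W).
Proof.
move=> oW; rewrite /open /= /quotient_open.
have -> : \pi_(torus B) @^-1` (proj @` W) = \bigcup_(u in lat B) ((+%R^~ (- u)) @^-1` W).
  apply/seteqP; split=> [y [w Ww /torus_projP Bwy]|y [u Bu /= Wyu]].
    by exists (y - w); [rewrite -opprB; exact: latN|rewrite /= opprB addrC subrK].
  by exists (y - u) => //; apply/torus_projP; rewrite addrAC subrr add0r; exact: latN.
apply: bigcup_open => u _; apply: open_comp => // y _.
exact: translation_continuous.
Qed.

Definition stab (S : set V) := [set u | lat B u /\ shift S u = S].

Lemma stab_subgroup S : is_subgroup (stab S).
Proof.
split=> [|u v [Bu Su] [Bv Sv]]; first by split; [exact: lat0|exact: shift0].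
split; first exact: latB.
by rewrite -shiftD Su -{1}Sv shiftD subrr shift0.
Qed.

Lemma stab_shift S u : stab (shift S u) = stab S.
Proof.
have shiftK T : shift (shift T u) (- u) = T by rewrite shiftD subrr shift0.
apply/seteqP; split=> v [Bv Sv]; split=> //.
  by rewrite -{1}(shiftK S) shiftD addrC -shiftD Sv shiftK.
by rewrite shiftD addrC -shiftD Sv.
Qed.

Lemma torus_proj_preimage_shift (Y : set (torus B)) u z : lat B u ->
  (proj @^-1` Y) (z + u) <-> (proj @^-1` Y) z.
Proof.
move=> Bu; have zu : proj (z + u) = proj z.
  by apply/torus_projP; rewrite addrAC subrr add0r.
by rewrite /= zu.
Qed.

Lemma stab_preimage_componentS (Y Y' : set (torus B)) x : Y `<=` Y' -> Y (proj x) ->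
  stab (connected_component (proj @^-1` Y) x) `<=`
  stab (connected_component (proj @^-1` Y') x).
Proof.
move=> YY' Yx u [Bu cu]; split=> //.
rewrite -shift_connected_component; last by move=> z; exact: torus_proj_preimage_shift.
apply/esym/same_connected_component.
apply: (connected_componentS (proj @^-1` Y)) => [z /YY' //|].
by rewrite -cu; apply/shiftP; rewrite addrK; exact: connected_component_refl.
Qed.
End Torus.

Lemma connected_open_cover {T : topologicalType} (A O1 O2 : set T) : connected A ->
  open O1 -> open O2 -> A `<=` O1 `|` O2 -> A `&` O1 `&` O2 = set0 ->
  A `<=` O1 \/ A `<=` O2.
Proof.
move=> cA oO1 oO2 AO AO0.
have sep : separated (A `&` O1) (A `&` O2).
  split; apply/seteqP; split=> // p.
    move=> [cp [Ap p2]]; have [q [[Aq q1] q2]] := cp O2 (open_nbhs_nbhs (conj oO2 p2)).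
    by have : (A `&` O1 `&` O2) q by []; rewrite AO0.
  move=> [[Ap p1] cp]; have [q [[Aq q2] q1]] := cp O1 (open_nbhs_nbhs (conj oO1 p1)).
  by have : (A `&` O1 `&` O2) q by []; rewrite AO0.
have AOO : A `<=` (A `&` O1) `|` (A `&` O2).
  by move=> p Ap; have [p1|p2] := AO p Ap; [left|right].
by have [h|h] := connected_subset sep AOO cA; [left|right] => p /h[].
Qed.

Section Sublevel.
Context {R : realType} {d : nat} (B : 'M[R]_d) (K : set (set 'rV[R]_d))
  (F : set 'rV[R]_d -> R).
Local Notation V := 'rV[R]_d.
Local Notation proj := (torus_proj B).
Hypothesis cK : cell_complex K.

(* [qsublevel B K F s] is by definition [proj @` sublevel s]. *)
Definition sublevel s : set V :=
  \bigcup_(sigma in [set sigma | K sigma /\ F sigma <= s]) sigma.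

Lemma sublevel_locally_connected s x : sublevel s x ->
  exists2 Q, open Q /\ Q x & Q `&` sublevel s `<=` connected_component (sublevel s) x.
Proof.
move=> Xx; have [U Ux finU] := cK.2.2.2 x.
pose far := [set sigma | (K sigma /\ sigma `&` U !=set0) /\ ~ sigma x].
have closed_far : closed (\bigcup_(sigma in far) sigma).
  apply: closed_bigcup => [|sigma [[Ksigma _] _]]; last exact: cell_closed Ksigma.
  by apply: sub_finite_set finU => sigma [].
have : nbhs x (U `&` ~` \bigcup_(sigma in far) sigma).
  apply: filterI => //; apply: open_nbhs_nbhs; split; first by rewrite openC.
  by move=> [sigma [_ nsx] sx].
rewrite nbhsE /= => -[Q [oQ Qx] QW]; exists Q => //.
move=> z [Qz [sigma [Ksigma Fsigma] sigmaz]].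
have [sigmax|nsigmax] := pselect (sigma x); last first.
  have [Uz nfar] := QW _ Qz; exfalso; apply: nfar; exists sigma => //.
  by split=> //; split=> //; exists z.
apply: (connected_component_max sigmax) => //; last exact: cell_connected Ksigma.
by move=> w sigmaw; exists sigma.
Qed.

Lemma sublevel_open_split s (U : set V) :
    (forall z w, U z -> connected_component (sublevel s) z w -> U w) ->
  exists W1 W2 : set V, [/\ open W1, open W2, sublevel s `<=` W1 `|` W2,
    W1 `&` sublevel s `<=` U & forall w, W2 w -> sublevel s w -> ~ U w].
Proof.
move=> Ucomp.
pose W (P : set V) := \bigcup_(Q in [set Q | open Q /\
  exists2 z, P z & Q `&` sublevel s `<=` connected_component (sublevel s) z]) Q.
have W_open P : open (W P) by apply: bigcup_open => Q [].
exists (W U), (W (~` U)); split=> //.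
- move=> z Xz; have [Q [oQ Qz] QX] := sublevel_locally_connected s z Xz.
  by have [Uz|nUz] := pselect (U z); [left|right]; exists Q => //; split=> //; exists z.
- by move=> w [[Q [_ [z Uz QX]] Qw] Xw]; apply: (Ucomp z) => //; apply: QX.
- move=> w [Q [_ [z nUz QX]] Qw] Xw Uw; apply: nUz; apply: (Ucomp w) => //.
  by apply: connected_component_sym; apply: QX.
Qed.

Hypotheses (pK : periodic_complex B K) (pF : periodic_filter B K F).

Lemma sublevel_shift s x u : lat B u -> sublevel s (x + u) <-> sublevel s x.
Proof.
suff Xu v y : lat B v -> sublevel s y -> sublevel s (y + v).
  by move=> Bu; split=> [/(Xu _ _ (latN Bu))|/Xu]; rewrite ?addrK; apply.
move=> Bv [sigma [Ksigma Fsigma] sigmay]; exists (shift sigma v); last by exists y.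
by split; [exact: pK|rewrite pF].
Qed.

Lemma qsublevel_proj s x : qsublevel B K F s (proj x) <-> sublevel s x.
Proof.
split=> [[y Xy /torus_projP Byx]|Xx]; last by exists x.
have -> : x = y + (x - y) by rewrite addrC subrK.
by rewrite sublevel_shift // -opprB; exact: latN.
Qed.
End Sublevel.

Section Shadows.
Context {R : realType} {d : nat} (B : 'M[R]_d) (K : set (set 'rV[R]_d))
  (F : set 'rV[R]_d -> R).
Hypotheses (cK : cell_complex K) (pK : periodic_complex B K) (pF : periodic_filter B K F).
Local Notation V := 'rV[R]_d.
Local Notation proj := (torus_proj B).
Local Notation X := (sublevel K F).
Local Notation qcomp s y := (connected_component (qsublevel B K F s) y).

Lemma qcomp_sublevel {s y x} : qcomp s y (proj x) -> X s x.
Proof. by move=> /connected_component_sub /qsublevel_proj; apply. Qed.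

Lemma shadow_connected_component s y x : qcomp s y (proj x) ->
  connected_component (proj @^-1` qcomp s y) x = connected_component (X s) x.
Proof.
move=> Gx; apply/seteqP; split.
  by apply: connected_componentS => z; exact: qcomp_sublevel.
apply: connected_component_max.
- by apply: connected_component_refl; exact: qcomp_sublevel Gx.
- move=> z cz; rewrite /= (same_connected_component Gx).
  suff : proj @` connected_component (X s) x `<=` qcomp s (proj x) by apply; exists z.
  apply: connected_component_max.
  + by exists x => //; apply: connected_component_refl; exact: qcomp_sublevel Gx.
  + by move=> _ [w cw <-]; exists w => //; exact: connected_component_sub cw.
  + apply: connected_continuous_connected; first exact: component_connected.
    by apply: continuous_subspaceT; exact: pi_continuous.
- exact: component_connected.
Qed.

Lemma qcomp_sub_proj s y (U : set V) :
    (forall z w, U z -> connected_component (X s) z w -> U w) ->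
    (forall z u, U z -> lat B u -> U (z + u)) ->
    (exists2 z, U z & qcomp s y (proj z)) ->
  qcomp s y `<=` proj @` U.
Proof.
move=> Ucomp Ushift [z0 Uz0 Gz0].
have Uproj z w : U z -> proj w = proj z -> U w.
  move=> Uz /torus_projP Bwz; have -> : w = z + (w - z) by rewrite addrC subrK.
  exact: Ushift.
have [W1 [W2 [oW1 oW2 XW W1U W2U]]] := sublevel_open_split K F cK s U Ucomp.
have [GW1|GW2] : qcomp s y `<=` proj @` W1 \/ qcomp s y `<=` proj @` W2.
- apply: connected_open_cover; [exact: component_connected| exact: torus_proj_open..| |].
  + move=> _ /[dup] /connected_component_sub[z Xz <-] Gz.
    by case: (XW z (qcomp_sublevel Gz)) => Wz; [left|right]; exists z.
  apply/seteqP; split=> // t [[Gt [w1 W1w1 w1t]] [w2 W2w2 w21]]; subst t.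
  have Gw2 : qcomp s y (proj w2) by rewrite w21.
  apply: (W2U w2 W2w2 (qcomp_sublevel Gw2)).
  exact: Uproj (W1U _ (conj W1w1 (qcomp_sublevel Gt))) w21.
- move=> t /[dup] Gt /GW1[w W1w wt]; exists w => //.
  by apply: W1U; split=> //; apply: (qcomp_sublevel (y := y)); rewrite wt.
- have [w2 W2w2 w2z0] := GW2 _ Gz0; exfalso.
  apply: (W2U w2 W2w2); last exact: Uproj w2z0.
  by apply: (qcomp_sublevel (y := y)); rewrite w2z0.
Qed.

Lemma shadows_translate s y x1 x2 : qcomp s y (proj x1) -> qcomp s y (proj x2) ->
  exists2 u, lat B u &
    connected_component (X s) x2 = shift (connected_component (X s) x1) u.
Proof.
move=> G1 G2; pose U := [set z | exists2 u, lat B u & connected_component (X s) (x1 + u) z].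
have Xshift u : lat B u -> forall z, X s (z + u) <-> X s z.
  by move=> Bu z; exact: sublevel_shift pK pF s z u Bu.
have Ucomp z w : U z -> connected_component (X s) z w -> U w.
  by move=> [u Bu cz] czw; exists u => //; rewrite (same_connected_component cz).
have Ushift z v : U z -> lat B v -> U (z + v).
  move=> [u Bu cz] Bv; exists (u + v); first exact: latD.
  by rewrite addrA shift_connected_component; [apply/shiftP; rewrite addrK|exact: Xshift].
have Ux1 : U x1.
  exists 0; first exact: lat0.
  by rewrite addr0; apply: connected_component_refl; exact: qcomp_sublevel G1.
have [z [u0 Bu0 cz] /torus_projP Bzx2] :=
  qcomp_sub_proj s y U Ucomp Ushift (ex_intro2 _ _ x1 Ux1 G1) (proj x2) G2.
have Bx2z : lat B (x2 - z) by rewrite -opprB; exact: latN.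
exists (u0 + (x2 - z)); first exact: latD.
rewrite -shift_connected_component; last exact: Xshift (latD Bu0 Bx2z).
rewrite addrA shift_connected_component; last exact: Xshift Bx2z.
rewrite (same_connected_component cz) -shift_connected_component; last exact: Xshift Bx2z.
by rewrite addrC subrK.
Qed.

Lemma shadow_stab_eq s y x x' : qcomp s y (proj x) -> qcomp s y (proj x') ->
  stab B (connected_component (proj @^-1` qcomp s y) x) =
  stab B (connected_component (proj @^-1` qcomp s y) x').
Proof.
move=> Gx Gx'; rewrite !shadow_connected_component //.
by have [u _ ->] := shadows_translate s y x x' Gx Gx'; rewrite stab_shift.
Qed.
End Shadows.

Section ShadowMonomial.
Context {R : realType} {d : nat} (B : 'M[R]_d).
Hypothesis unitB : B \in unitmx.
Local Notation proj := (torus_proj B).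

Lemma shadow_monomialP (Y : set (torus B)) : Y !=set0 ->
  exists x p (C : 'M[R]_(p, d)), [/\ Y (proj x), row_free C,
    lat C = stab B (connected_component (proj @^-1` Y) x) &
    shadow_monomial B Y = lat_monomial B C].
Proof.
move=> [t Yt]; pose gamma := connected_component (proj @^-1` Y) (repr t).
have [p [C [freeC CE]]] :=
  lat_subgroup_basis B unitB _ (stab_subgroup B gamma) (fun u => @proj1 _ _).
have Yrt : Y (proj (repr t)) by rewrite /torus_proj reprK.
rewrite /shadow_monomial; set P := (X in xget _ X).
have : P (lat_monomial B C) by exists (repr t); split=> //; exists p, C.
move=> /(ex_intro P) /(xgetPex (0, 0%N))[x [Yx [p' [C' [freeC' [C'E ->]]]]]].
by exists x, p', C'.
Qed.

Lemma shadow_monomial_le (Y Y' : set (torus B)) :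
  Y !=set0 -> Y `<=` Y' ->
  (forall x x', Y' (proj x) -> Y' (proj x') ->
     stab B (connected_component (proj @^-1` Y') x) =
     stab B (connected_component (proj @^-1` Y') x')) ->
  mono_le (shadow_monomial B Y') (shadow_monomial B Y).
Proof.
move=> Y0 YY' Y'stab.
have [x [p [C [Yx freeC CE ->]]]] := shadow_monomialP Y Y0.
have [|x' [p' [C' [Y'x' freeC' C'E ->]]]] := shadow_monomialP Y'.
  by exists (proj x); exact: YY'.
apply: lat_monomial_le => //; rewrite CE C'E -(Y'stab x x' (YY' _ Yx) Y'x').
exact: stab_preimage_componentS.
Qed.
End ShadowMonomial.

Section DistanceBounds.
Context {R : realType}.

Lemma dI_ge0 (M M' : pmt R) : (0 <= dI M M')%E.
Proof. by apply: le_ereal_inf_tmp => _ [e [e0 _] <-]; rewrite lee_fin. Qed.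

Lemma dI_self (M : pmt R) : (forall A, pm_cov M A A) -> dI M M = 0%E.
Proof.
move=> Mcov; apply/eqP; rewrite eq_le dI_ge0 andbT.
apply: ereal_inf_lbound; exists 0 => //; split=> //; exists id, id.
have id_cont : {within pm_dom M, continuous id}.
  by apply: continuous_subspaceT => x; exact: cvg_id.
do !split=> //; move=> A _; rewrite ?addr0 //.
all: by right.
Qed.

Lemma splinters_refl (M : pmt R) : (forall A, pm_cov M A A) -> splinters M M.
Proof.
move=> Mcov; exists id; split; first by apply: continuous_subspaceT => x; exact: cvg_id.
split=> //; split; first by move=> x Mx; exists x.
split=> // G MG; exists 1%N; split.
  suff -> : [set A | pm_dom M A /\ id A = G] = [set G] by exact: card_set1.
  by apply/seteqP; split=> [A [_ ->]|A ->].
move=> A A' [_ ->] [_ ->]; rewrite dI_self // image_id divr1 -surjective_pairing.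
by do !split.
Qed.

Lemma pmt_equiv_refl {d} (D : pdata R d) : pmt_equiv d (MTof D) (MTof D).
Proof. by exists D; split; apply: splinters_refl => A; exact: mt_covers_refl. Qed.

Lemma Jdist_le_dI {d} (D D' : pdata R d) :
  (Jdist d (MTof D) (MTof D') <= dI (MTof D) (MTof D'))%E.
Proof.
apply: ereal_inf_lbound; exists 1%N, (fun=> D), (fun=> D').
by do !split=> //; [exact: pmt_equiv_refl|exact: pmt_equiv_refl|rewrite big_ord1].
Qed.

Lemma supnorm_ge0 {d} (K : set (set 'rV[R]_d)) F G : (0 <= supnorm K F G)%E.
Proof. by apply: ereal_sup_ubound; left. Qed.

Lemma supnorm_ub {d} (K : set (set 'rV[R]_d)) F G sigma :
  K sigma -> ((`|F sigma - G sigma|)%:E <= supnorm K F G)%E.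
Proof. by move=> Ksigma; apply: ereal_sup_ubound; right; exists sigma. Qed.
End DistanceBounds.

Section MergeTreeInterleaving.
Context {R : realType} {d : nat} (B : 'M[R]_d) (K : set (set 'rV[R]_d)).
Hypotheses (unitB : B \in unitmx) (cK : cell_complex K) (pK : periodic_complex B K).

Lemma qsublevel_shift (F G : set 'rV[R]_d -> R) e s x :
  (forall sigma, K sigma -> G sigma <= F sigma + e) ->
  qsublevel B K F s x -> qsublevel B K G (s + e) x.
Proof.
move=> GFe [z [sigma [Ksigma Fsigma] sigmaz] <-]; exists z => //; exists sigma => //.
by split=> //; apply: le_trans (GFe _ Ksigma) _; rewrite lerD2r.
Qed.

Lemma mt_shift_freq_le (F G : set 'rV[R]_d -> R) e
    (FG : forall s x, qsublevel B K F s x -> qsublevel B K G (s + e) x) A :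
  periodic_filter B K G ->
  mono_le (pm_freq (MT B K G) (mt_shift FG A)) (pm_freq (MT B K F) A).
Proof.
move=> pG; apply: shadow_monomial_le => //.
- exact: mt_comp_nonempty.
- exact: mt_shift_comp.
- by move=> x x'; apply: shadow_stab_eq.
Qed.

Lemma dI_MT_le (F G : set 'rV[R]_d -> R) e : 0 <= e ->
    periodic_filter B K F -> periodic_filter B K G ->
    (forall sigma, K sigma -> `|F sigma - G sigma| <= e) ->
  (dI (MT B K F) (MT B K G) <= e%:E)%E.
Proof.
move=> e_ge0 pF pG FGe.
have FG s x : qsublevel B K F s x -> qsublevel B K G (s + e) x.
  by apply: qsublevel_shift => sigma /FGe; rewrite ler_norml => /andP[? ?]; lra.
have GF s x : qsublevel B K G s x -> qsublevel B K F (s + e) x.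
  by apply: qsublevel_shift => sigma /FGe; rewrite ler_norml => /andP[? ?]; lra.
apply: ereal_inf_lbound; exists e => //; split=> //.
exists (mt_shift FG), (mt_shift GF).
split; first exact/continuous_subspaceT/mt_shift_continuous.
split; first exact/continuous_subspaceT/mt_shift_continuous.
do 2!split=> //.
split; first by move=> A _; exact: mt_shift_height.
split; first by move=> A _; exact: mt_shift_height.
split; first by move=> A _; exact: mt_shift_covers.
split; first by move=> A _; exact: mt_shift_covers.
by split=> A _; exact: mt_shift_freq_le.
Qed.
End MergeTreeInterleaving.

Theorem mainTheorem3 (R : realType) (d : nat) (B : 'M[R]_d)
  (K : set (set 'rV[R]_d)) (F G : set 'rV[R]_d -> R) :
  row_free B ->
  cell_complex K -> periodic_complex B K ->
  is_filter K F -> is_filter K G ->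
  periodic_filter B K F -> periodic_filter B K G ->
  (dI (MT B K F) (MT B K G) <= supnorm K F G)%E /\
  (Jdist d (MT B K F) (MT B K G) <= supnorm K F G)%E.
Proof.
move=> freeB cK pK fF fG pF pG.
have unitB : B \in unitmx by rewrite -row_free_unit.
have dI_le : (dI (MT B K F) (MT B K G) <= supnorm K F G)%E.
  move: (supnorm_ge0 K F G) (supnorm_ub K F G).
  case: (supnorm K F G) => [e||] // e_ge0 FGe; last by rewrite leey.
  by apply: dI_MT_le; rewrite -?lee_fin // => sigma /FGe; rewrite lee_fin.
split=> //; apply: le_trans dI_le.
pose DF := @PData R d B K F (conj freeB (conj cK (conj pK (conj fF pF)))).
pose DG := @PData R d B K G (conj freeB (conj cK (conj pK (conj fG pG)))).
exact: (Jdist_le_dI DF DG).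
Qed.
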